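(* For every $a_1,\dots,a_{2^n}\in F$ and all distinct $w,w'\in F^d$: (1) there is a prover strategy $r$ such that Alice's output equals $(\tilde A(w),\tilde A(w'))$ with probability $1$; (2) for every prover strategy $r$, Alice's output lies in $\{(\tilde A(w),\tilde A(w')),Err\}$ with probability at least $1-1/n^{c-1.5}$.
   Context: Parameters. - $n>4$ is a power of $2$ with $\log_2 n$ even, and $d:=2n/\log_2 n$ is assumed to be an integer. - $F$ is a finite field with $|F|=2^a=n^c$, where $c\ge 2$ is a constant integer. - $H\subset F$ is a fixed subset with $|H|=\sqrt n$, and $\pi:H^d\to[2^n]$ is a fixed bijection. Low degree extension. - For $a_1,\dots,a_{2^n}\in F$, define $A(z)=a_{\pi(z)}$ on $H^d$. - $\tilde A:F^d\to F$ is the unique polynomial of degree at most $|H|-1$ in each variable extending $A$. Its total degree is $<n^{1.5}$. - $|\Psi(a_1,\dots,a_{2^n})\rangle=|F|^{-d/2}\sum_{z\in F^d}|z_1\rangle\cdots|z_d\rangle|\tilde A(z)\rangle$. Measuring it in the standard basis yields a uniformly random $z\in F^d$ together with $\tilde A(z)$. Two-value retrieval protocol. - Alice measures, obtaining a uniform $z\in F^d$ and $\tilde A(z)$. - She sends to Merlin the affine subspace $P=\{w+(z-w)t_1+(w'-w)t_2: t_1,t_2\in F\}$. This is a plane, or a line if $z,w,w'$ are collinear. - A prover strategy $r$ is a deterministic assignment, to each affine subspace $P$ of dimension $1$ or $2$ containing $w,w'$, of a function $g_P:P\to F$. - Let $g(t_1,t_2)=g_P(w+(z-w)t_1+(w'-w)t_2)$.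 Alice outputs $Err$ if $g$ is not a polynomial of total degree $<n^{1.5}$ in $(t_1,t_2)$, or if $g(1,0)\ne\tilde A(z)$. Otherwise she outputs $(g(0,0),g(0,1))$. *)

From HB Require Import structures.
From mathcomp Require Import all_boot all_order all_algebra.
From mathcomp Require Import mpoly.
From Stdlib Require Import ClassicalEpsilon.
Set Implicit Arguments. Unset Strict Implicit. Unset Printing Implicit Defensive.
Import Order.TTheory GRing.Theory Num.Theory.
Local Open Scope ring_scope.

(* Classical boolean reflection of a proposition (used for the event
   "g is a polynomial of total degree < N", which quantifies over polynomials). *)
Definition decP (P : Prop) : bool :=
  if excluded_middle_informative P then true else false.

Definition coords (F : fieldType) (d : nat) (z : 'rV[F]_d) : 'I_d -> F :=
  fun i => z ord0 i.

Definition cube (F : finFieldType) (d : nat) (H : {set F}) : {set 'rV[F]_d} :=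
  [set z : 'rV[F]_d | [forall i, z ord0 i \in H]].

Definition is_LDE (F : finFieldType) (d N : nat) (H : {set F})
    (pi : 'rV[F]_d -> 'I_N) (a : 'I_N -> F) (P : {mpoly F[d]}) : Prop :=
  (forall m, m \in msupp P -> forall i, (m i <= #|H|.-1)%N) /\
  (forall z, z \in cube d H -> P.@[coords z] = a (pi z)).

Definition plane (F : finFieldType) (d : nat) (w w' z : 'rV[F]_d)
  : {set 'rV[F]_d} :=
  [set w + t.1 *: (z - w) + t.2 *: (w' - w) | t in [set: F * F]].

(* A (deterministic) prover strategy: to each affine subspace (given as a
   set of points) it assigns a function g_P (only its values on P matter). *)
Definition strategy (F : finFieldType) (d : nat) :=
  {set 'rV[F]_d} -> 'rV[F]_d -> F.

Definition gfun (F : finFieldType) (d : nat) (r : strategy F d)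
    (w w' z : 'rV[F]_d) (t1 t2 : F) : F :=
  r (plane w w' z) (w + t1 *: (z - w) + t2 *: (w' - w)).

Definition poly2_deg_lt (F : fieldType) (D : nat) (g : F -> F -> F) : Prop :=
  exists q : {mpoly F[2]},
    (forall m, m \in msupp q -> (mdeg m < D)%N) /\
    (forall t1 t2, g t1 t2 = q.@[[ffun i : 'I_2 => if i == ord0 then t1 else t2]]).

(* Alice's output: None = Err, Some (x, y) = output (x, y).
   Atil is the low-degree extension, D the degree bound n^1.5. *)
Definition alice_output (F : finFieldType) (d : nat) (D : nat)
    (Atil : 'rV[F]_d -> F) (r : strategy F d) (w w' z : 'rV[F]_d)
  : option (F * F) :=
  let g := gfun r w w' z in
  if decP (poly2_deg_lt D g) && (g 1 0 == Atil z)
  then Some (g 0 0, g 0 1) else None.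

Definition prob_z (F : finFieldType) (d : nat) (E : pred 'rV[F]_d) : rat :=
  (#|[set z : 'rV[F]_d | E z]|%:R / (#|F| ^ d)%:R)%R.

From HB Require Import structures.
From mathcomp Require Import all_boot all_order all_algebra.
From mathcomp Require Import mpoly ring zify.
From Stdlib Require Import ClassicalEpsilon.
Import Order.TTheory GRing.Theory Num.Theory.
Set Implicit Arguments. Unset Strict Implicit. Unset Printing Implicit Defensive.
Local Open Scope ring_scope.

(* Completeness: the honest prover answers with the low-degree extension itself,
   whose restriction to any plane is a bivariate polynomial of degree < n^1.5.

   Soundness: the plane Alice sends depends on z only through its orbit
   {w + s(z - w) + u(w' - w) : s <> 0}, of size q(q - 1) when z - w and w' - w
   are independent (q = |F|).  If some point of an orbit fools Alice, the
   prover's answer g on that plane is a polynomial of degree < D differing from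
   the extension at (0,0) or (0,1), and the orbit point with parameters (s,u)
   fools Alice only if g minus the extension vanishes at (s,u): by a root count
   along lines this happens for at most (D - 1)q parameters.  Hence at most a
   (D - 1)/(q - 1) fraction of the independent points are fooling, the
   dependent points number at most q, and with q = n^c, D = n^1.5 the total is
   below a 1/n^(c - 1.5) fraction of F^d. *)

Lemma msizeM_le_pred (n : nat) (R : nzRingType) (p q : {mpoly R[n]}) :
  (msize (p * q) <= (msize p + msize q).-1)%N.
Proof.
have [->|nz_p] := eqVneq p 0; first by rewrite mul0r msize0.
have [->|nz_q] := eqVneq q 0; first by rewrite mulr0 msize0.
have [->|nz_pq] := eqVneq (p * q) 0; first by rewrite msize0.
rewrite -!mlead_deg // addSn /=.
have /lemc_mdeg := mleadM_le p q; rewrite mdegD; lia.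
Qed.

Lemma msize_le_of_mdeg_lt (n : nat) (R : nzRingType) (p : {mpoly R[n]}) (D : nat) :
  (forall m, m \in msupp p -> (mdeg m < D)%N) -> (msize p <= D)%N.
Proof. by move=> hD; rewrite msizeE; apply/bigmax_leqP_seq => m mp _; exact: hD. Qed.

Lemma msize_prodX_affine (n k : nat) (R : nzRingType) (lq : 'I_n -> {mpoly R[k]})
    (m : 'X_{1..n}) :
  (forall i, msize (lq i) <= 2)%N ->
  (msize (\prod_(i < n) lq i ^+ m i) <= (mdeg m).+1)%N.
Proof.
move=> hlq; rewrite mdegE.
apply: (big_ind2 (fun x y => msize x <= y.+1)%N); first by rewrite msize1.
  move=> x1 y1 x2 y2 h1 h2; apply: leq_trans (msizeM_le_pred _ _) _.
  by have := leq_add h1 h2; lia.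
move=> i _; elim: (m i) => [|e IHe]; first by rewrite expr0 msize1.
rewrite exprS; apply: leq_trans (msizeM_le_pred _ _) _.
by have := leq_add (hlq i) IHe; lia.
Qed.

Lemma msize_comp_affine (n k : nat) (R : nzRingType) (p : {mpoly R[n]})
    (lq : n.-tuple {mpoly R[k]}) :
  (forall i, msize (tnth lq i) <= 2)%N -> (msize (p \mPo lq) <= msize p)%N.
Proof.
move=> hlq; rewrite comp_mpolyEX big_seq.
apply: (big_ind (fun q => msize q <= msize p)%N); first by rewrite msize0.
  by move=> x y hx hy; apply: leq_trans (msizeD_le _ _) _; rewrite geq_max hx hy.
move=> m hm; apply: leq_trans (msizeZ_le _ _) _; rewrite comp_mpolyX.
exact: leq_trans (msize_prodX_affine _ hlq) (msize_mdeg_lt hm).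
Qed.

Lemma size_mmap_affine (F : fieldType) n (Q : {mpoly F[n]}) (h : 'I_n -> {poly F}) :
  (forall i, size (h i) <= 2)%N -> (size (mmap polyC h Q) <= msize Q)%N.
Proof.
move=> hh; rewrite /mmap big_seq.
apply: (big_ind (fun q : {poly F} => size q <= msize Q)%N); first by rewrite size_poly0.
  by move=> x y hx hy; apply: leq_trans (size_polyD _ _) _; rewrite geq_max hx hy.
move=> m hm; rewrite mul_polyC; apply: leq_trans (size_scale_leq _ _) _.
apply: leq_trans _ (msize_mdeg_lt hm); rewrite /mmap1 mdegE.
apply: (big_ind2 (fun (x : {poly F}) y => size x <= y.+1)%N); first by rewrite size_poly1.
  move=> x1 y1 x2 y2 h1 h2; apply: leq_trans (size_polyMleq _ _) _.
  by have := leq_add h1 h2; lia.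
move=> i _; apply: leq_trans (size_poly_exp_leq _ _) _.
by have := hh i; nia.
Qed.

Lemma horner_mmap (F : fieldType) n (Q : {mpoly F[n]}) (h : 'I_n -> {poly F}) x :
  (mmap polyC h Q).[x] = Q.@[fun i => (h i).[x]].
Proof.
rewrite /mmap mevalE horner_sum; apply: eq_bigr => m _.
rewrite hornerM hornerC /mmap1 horner_prod; congr (_ * _).
by apply: eq_bigr => i _; rewrite horner_exp.
Qed.

Lemma card_roots_le (F : finFieldType) (p : {poly F}) :
  p != 0 -> (#|[set x | root p x]| <= (size p).-1)%N.
Proof.
move=> nz_p; rewrite cardE -ltnS (leq_trans _ (leqSpred _)) //.
apply: max_poly_roots nz_p _ _; last exact: enum_uniq.
by apply/allP => x; rewrite mem_enum inE.
Qed.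

Lemma card_pairs_sum (A B : finType) (P : A -> B -> bool) :
  #|[set x : A * B | P x.1 x.2]| = (\sum_(a : A) #|[set b | P a b]|)%N.
Proof.
rewrite -sum1_card; under [RHS]eq_bigr => a _ do rewrite -sum1_card.
by rewrite pair_big_dep /=; apply: eq_bigl => -[a b] /=; rewrite !inE.
Qed.

Definition pair2 (F : fieldType) (t1 t2 : F) : {ffun 'I_2 -> F} :=
  [ffun i : 'I_2 => if i == ord0 then t1 else t2].

Definition affine2 (F : fieldType) (c a b : F) : {mpoly F[2]} :=
  c%:MP + a *: 'X_ord0 + b *: 'X_ord_max.

Lemma msize_affine2 (F : fieldType) (c a b : F) : (msize (affine2 c a b) <= 2)%N.
Proof.
have msizeZX (e : F) i : (msize (e *: 'X_i) <= 2)%N.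
  by apply: leq_trans (msizeZ_le _ _) _; rewrite msizeX mdeg1.
rewrite /affine2; apply: leq_trans (msizeD_le _ _) _; rewrite geq_max msizeZX andbT.
apply: leq_trans (msizeD_le _ _) _; rewrite geq_max msizeZX andbT.
by rewrite msizeC; case: (c != 0).
Qed.

Lemma meval_affine2 (F : fieldType) (c a b : F) t1 t2 :
  (affine2 c a b).@[pair2 t1 t2] = c + a * t1 + b * t2.
Proof. by rewrite /affine2 !mevalD mevalC !mevalZ !mevalXU !ffunE. Qed.

Lemma poly2_deg_lt_of_msize (F : fieldType) (D : nat) (g : F -> F -> F)
    (Q : {mpoly F[2]}) :
  (msize Q <= D)%N -> (forall t1 t2, g t1 t2 = Q.@[pair2 t1 t2]) -> poly2_deg_lt D g.
Proof.
by move=> hQ hg; exists Q; split=> // m /msize_mdeg_lt/leq_trans; apply.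
Qed.

Lemma poly2_deg_lt_affine_subst (F : fieldType) (D : nat) (g g' : F -> F -> F)
    (c1 a1 b1 c2 a2 b2 : F) :
  poly2_deg_lt D g ->
  (forall t1 t2, g' t1 t2 = g (c1 + a1 * t1 + b1 * t2) (c2 + a2 * t1 + b2 * t2)) ->
  poly2_deg_lt D g'.
Proof.
case=> q [hq hqg] hg'; set lq := [tuple affine2 c1 a1 b1; affine2 c2 a2 b2].
have lqE i : tnth lq i = if i == ord0 then affine2 c1 a1 b1 else affine2 c2 a2 b2.
  by rewrite (tnth_nth 0); case: i => [[|[|//]] ?].
apply: (poly2_deg_lt_of_msize (Q := q \mPo lq)).
  apply: leq_trans (msize_comp_affine _ _) (msize_le_of_mdeg_lt hq) => i.
  by rewrite lqE; case: ifP => _; exact: msize_affine2.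
move=> t1 t2; rewrite hg' hqg comp_mpoly_meval; apply: meval_eq => i.
by rewrite !ffunE lqE; case: ifP => _; rewrite meval_affine2.
Qed.

(* Each zero [(t1, t2)] with [t1 != 0] lies on exactly one line through
   [(0, al)], and [Q] restricted to such a line is a nonzero univariate
   polynomial of degree [< D]. *)
Lemma card_zeros_off_axis (F : finFieldType) (Q : {mpoly F[2]}) (D : nat) (al : F) :
  (msize Q <= D)%N -> Q.@[pair2 0 al] != 0 ->
  (#|[set t : F * F | (t.1 != 0%R) && (Q.@[pair2 t.1 t.2] == 0%R)]| <= D.-1 * #|F|)%N.
Proof.
move=> hQ hal.
pose line (v : F) (i : 'I_2) : {poly F} := if i == ord0 then 'X else al%:P + v *: 'X.
pose p (v : F) := mmap polyC (line v) Q.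
have hp v x : (p v).[x] = Q.@[pair2 x (al + v * x)].
  rewrite horner_mmap; apply: meval_eq => i; rewrite ffunE /line.
  by case: (i == ord0); rewrite ?hornerX ?hornerD ?hornerC ?hornerZ ?hornerX.
have nz_p v : p v != 0.
  by apply: contraNneq hal => pv0; have := hp v 0; rewrite pv0 horner0 mulr0 addr0 => <-.
have size_p v : (size (p v) <= D)%N.
  apply: leq_trans (size_mmap_affine _ _) hQ => i; rewrite /line.
  case: (i == ord0); first by rewrite size_polyX.
  apply: leq_trans (size_polyD _ _) _; rewrite geq_max size_polyC.
  apply/andP; split; first by case: (al != 0).
  by apply: leq_trans (size_scale_leq _ _) _; rewrite size_polyX.
pose to_zero (x : F * F) := (x.2, al + x.1 * x.2).
apply: (@leq_trans #|to_zero @: [set x : F * F | root (p x.1) x.2]|).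
  apply: subset_leq_card; apply/subsetP => -[t1 t2]; rewrite inE /= => /andP [t1_nz hQt].
  have slope : al + (t2 - al) / t1 * t1 = t2 by rewrite divfK // addrC subrK.
  apply/imsetP; exists ((t2 - al) / t1, t1); last by rewrite /to_zero /= slope.
  by rewrite inE /= /root hp; move: hQt; rewrite -{1}slope.
apply: leq_trans (leq_imset_card _ _) _.
rewrite (card_pairs_sum (fun v x => root (p v) x)).
apply: (@leq_trans (\sum_(v : F) D.-1)); last by rewrite sum_nat_const mulnC.
apply: leq_sum => v _; apply: leq_trans (card_roots_le (nz_p v)) _.
by rewrite -!subn1 leq_sub2r.
Qed.

Definition pt (F : fieldType) d (w w' z : 'rV[F]_d) (t1 t2 : F) : 'rV[F]_d :=
  w + t1 *: (z - w) + t2 *: (w' - w).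

Section PlaneGeometry.
Variables (F : fieldType) (d : nat) (w w' z : 'rV[F]_d).

Lemma pt_comp s u a b : pt w w' (pt w w' z s u) a b = pt w w' z (s * a) (u * a + b).
Proof. by apply/rowP => i; rewrite !mxE; ring. Qed.

Lemma pt10 : pt w w' z 1 0 = z. Proof. by apply/rowP => i; rewrite !mxE; ring. Qed.
Lemma pt00 : pt w w' z 0 0 = w. Proof. by apply/rowP => i; rewrite !mxE; ring. Qed.
Lemma pt01 : pt w w' z 0 1 = w'. Proof. by apply/rowP => i; rewrite !mxE; ring. Qed.

Lemma mpoly_restrict_plane (P : {mpoly F[d]}) :
  exists2 Q : {mpoly F[2]}, (msize Q <= msize P)%N &
    forall t1 t2, Q.@[pair2 t1 t2] = P.@[coords (pt w w' z t1 t2)].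
Proof.
pose lq := [tuple affine2 (w ord0 i) (z ord0 i - w ord0 i) (w' ord0 i - w ord0 i) | i < d].
exists (P \mPo lq).
  by apply: msize_comp_affine => i; rewrite tnth_mktuple; exact: msize_affine2.
move=> t1 t2; rewrite comp_mpoly_meval; apply: meval_eq => i.
by rewrite tnth_mktuple meval_affine2 /coords /pt !mxE; ring.
Qed.

End PlaneGeometry.

Section PlaneOrbits.
Variables (F : finFieldType) (d : nat) (w w' : 'rV[F]_d).

Lemma plane_pt z s u : s != 0 -> plane w w' (pt w w' z s u) = plane w w' z.
Proof.
move=> nz_s; apply/setP => x; apply/imsetP/imsetP => -[[t1 t2] _ ->] /=.
  by exists (s * t1, u * t1 + t2); rewrite ?inE //; exact: (pt_comp w w' z s u t1 t2).
exists (t1 / s, t2 - u * (t1 / s)); rewrite ?inE //=.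
have := pt_comp w w' z s u (t1 / s) (t2 - u * (t1 / s)); rewrite /pt => ->.
by congr (_ + _ *: _ + _ *: _); field.
Qed.

Lemma gfunE (r : strategy F d) z t1 t2 :
  gfun r w w' z t1 t2 = r (plane w w' z) (pt w w' z t1 t2).
Proof. by []. Qed.

Lemma gfun_pt (r : strategy F d) z s u a b : s != 0 ->
  gfun r w w' (pt w w' z s u) a b = gfun r w w' z (s * a) (u * a + b).
Proof. by move=> nz_s; rewrite !gfunE plane_pt // pt_comp. Qed.

(* All points of an orbit span the same plane with [w, w'], so the prover
   answers them alike (see [gfun_pt]). *)
Definition plane_orbit z : {set 'rV[F]_d} :=
  [set pt w w' z t.1 t.2 | t in [set t : F * F | t.1 != 0]].

Lemma plane_orbit_sym z z' : z' \in plane_orbit z -> z \in plane_orbit z'.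
Proof.
case/imsetP => -[s u]; rewrite inE /= => nz_s ->.
apply/imsetP; exists (s^-1, - (u / s)); first by rewrite inE /= invr_eq0.
by rewrite pt_comp /= -[LHS](pt10 w w' z); congr pt; field.
Qed.

Definition affine_indep z : bool :=
  [forall t : F * F, (t.1 *: (z - w) + t.2 *: (w' - w) == 0) ==> (t == (0, 0))].

Lemma card_plane_orbit z : affine_indep z -> #|plane_orbit z| = (#|F| * #|F|.-1)%N.
Proof.
move=> hz; rewrite card_in_imset.
  have -> : [set t : F * F | t.1 != 0] = setX [set~ 0] setT.
    by apply/setP => -[a b]; rewrite !inE /= andbT.
  by rewrite cardsX cardsC1 cardsT mulnC.
move=> [a b] [a' b'] _ _ /= e.
have hab : (a - a') *: (z - w) + (b - b') *: (w' - w) == 0.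
  have -> : (a - a') *: (z - w) + (b - b') *: (w' - w) = pt w w' z a b - pt w w' z a' b'.
    by apply/rowP => i; rewrite !mxE; ring.
  by rewrite e subrr.
move/forallP: hz => /(_ (a - a', b - b')) /implyP /(_ hab).
by rewrite xpair_eqE !subr_eq0 => /andP [/eqP -> /eqP ->].
Qed.

(* Dependent points lie on the line through [w] and [w']. *)
Lemma card_not_affine_indep : w != w' -> (#|[set z | ~~ affine_indep z]| <= #|F|)%N.
Proof.
move=> ww'.
apply: (@leq_trans #|[set w + t *: (w' - w) | t in [set: F]]|); last first.
  by apply: leq_trans (leq_imset_card _ _) _; rewrite cardsT.
apply/subset_leq_card/subsetP => z; rewrite inE negb_forall => /existsP [[s u]].
rewrite negb_imply /= xpair_eqE => /andP [/eqP e hsu].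
have [s0|nz_s] := eqVneq s 0.
  move: e hsu; rewrite s0 scale0r add0r eqxx /= => /eqP; rewrite scaler_eq0 subr_eq0.
  by rewrite [w' == w]eq_sym (negbTE ww') orbF => /eqP ->; rewrite eqxx.
apply/imsetP; exists (- (u / s)); first by rewrite inE.
rewrite -[z](subrK w) addrC; congr (_ + _).
have -> : z - w = s^-1 *: (s *: (z - w) + u *: (w' - w)) - (u / s) *: (w' - w).
  by apply/rowP => i; rewrite !mxE; field.
by rewrite e scaler0 add0r scaleNr.
Qed.

(* Count the pairs [(z', z)] with [z' \in B] independent and [z] in the orbit
   of [z'], equivalently [z'] in the orbit of [z]. *)
Lemma double_count_plane_orbits (B : {set 'rV[F]_d}) (K : nat) :
  (forall z, #|B :&: plane_orbit z| <= K)%N ->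
  (#|B :&: [set z | affine_indep z]| * (#|F| * #|F|.-1) <= #|F| ^ d * K)%N.
Proof.
move=> hK; set Bi := B :&: _.
have -> : (#|Bi| * (#|F| * #|F|.-1) = \sum_(z' in Bi) #|plane_orbit z'|)%N.
  rewrite -sum_nat_const; apply: eq_bigr => z'; rewrite !inE => /andP [_ hz'].
  by rewrite card_plane_orbit.
have -> : (\sum_(z' in Bi) #|plane_orbit z'| = \sum_z #|Bi :&: plane_orbit z|)%N.
  under eq_bigr => z' _ do rewrite -sum1_card.
  rewrite (exchange_big_dep xpredT) //=; apply: eq_bigr => z _.
  rewrite -sum1_card; apply: eq_bigl => z'; rewrite !inE.
  by case: (z' \in B) (affine_indep z') => [] [] //=; apply/idP/idP => /plane_orbit_sym.
apply: (@leq_trans (\sum_(z : 'rV[F]_d) K)); last by rewrite sum_nat_const card_mx mul1n.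
apply: leq_sum => z _; apply: leq_trans (hK z); apply/subset_leq_card/setSI/subsetIl.
Qed.

End PlaneOrbits.

Lemma decPP (P : Prop) : reflect P (decP P).
Proof. by rewrite /decP; case: excluded_middle_informative => h; constructor. Qed.

Definition fooled (F : finFieldType) d (D : nat) (Atil : 'rV[F]_d -> F)
    (r : strategy F d) (w w' z : 'rV[F]_d) : bool :=
  [&& decP (poly2_deg_lt D (gfun r w w' z)), gfun r w w' z 1 0 == Atil z &
      (gfun r w w' z 0 0, gfun r w w' z 0 1) != (Atil w, Atil w')].

Section Soundness.
Variables (F : finFieldType) (d : nat) (w w' : 'rV[F]_d).
Variables (P : {mpoly F[d]}) (D : nat) (r : strategy F d).
Hypothesis msize_P : (msize P <= D)%N.

Let Atil (z : 'rV[F]_d) := P.@[coords z].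

Lemma alice_output_fooled z :
  ~~ fooled D Atil r w w' z ->
  (alice_output D Atil r w w' z == Some (Atil w, Atil w'))
  || (alice_output D Atil r w w' z == None).
Proof.
rewrite /alice_output /fooled; case: ifP => [/andP [-> ->] | _]; last by rewrite orbT.
by rewrite negbK orbF => /eqP ->.
Qed.

Lemma poly2_deg_lt_plane_orbit z z' : z' \in plane_orbit w w' z ->
  poly2_deg_lt D (gfun r w w' z') -> poly2_deg_lt D (gfun r w w' z).
Proof.
case/plane_orbit_sym/imsetP => -[s u]; rewrite inE /= => nz_s -> hz'.
apply: (poly2_deg_lt_affine_subst (c1 := 0) (a1 := s) (b1 := 0) (c2 := 0) (a2 := u)
  (b2 := 1) hz') => t1 t2.
by rewrite gfun_pt // mul0r mul1r !add0r addr0.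
Qed.

(* On an orbit with a fooling point, [g - P] restricted to the plane is a
   polynomial of degree [< D] that is nonzero at [(0,0)] or [(0,1)] but
   vanishes at the parameters of every fooling point of the orbit. *)
Lemma card_fooled_plane_orbit z :
  (#|[set x | fooled D Atil r w w' x] :&: plane_orbit w w' z| <= D.-1 * #|F|)%N.
Proof.
have [-> | [z0]] := set_0Vmem ([set x | fooled D Atil r w w' x] :&: plane_orbit w w' z).
  by rewrite cards0.
rewrite !inE => /andP [/and3P [/decPP g_z0 _ wrong_z0] z0_orbit].
have [G msize_G gG] : exists2 G : {mpoly F[2]}, (msize G <= D)%N &
    forall t1 t2, gfun r w w' z t1 t2 = G.@[pair2 t1 t2].
  have [G [degG gG]] := poly2_deg_lt_plane_orbit z0_orbit g_z0.
  by exists G => //; exact: msize_le_of_mdeg_lt.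
have [Pz msize_Pz Pz_pt] := mpoly_restrict_plane w w' z P.
pose Q := G - Pz.
have QE t1 t2 : Q.@[pair2 t1 t2] = gfun r w w' z t1 t2 - Atil (pt w w' z t1 t2).
  by rewrite mevalB gG Pz_pt.
have [al Q_al] : exists al : F, Q.@[pair2 0 al] != 0.
  move: z0_orbit wrong_z0 => /imsetP [[s0 u0]]; rewrite inE /= => nz_s0 ->.
  rewrite !gfun_pt // !mulr0 !add0r xpair_eqE negb_and.
  by case/orP => [h | h]; [exists 0 | exists 1]; rewrite QE ?pt00 ?pt01 subr_eq0.
have msize_Q : (msize Q <= D)%N.
  apply: leq_trans (msizeD_le _ _) _.
  by rewrite msizeN geq_max msize_G (leq_trans msize_Pz msize_P).
apply: leq_trans (card_zeros_off_axis msize_Q Q_al).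
apply: leq_trans (leq_imset_card (fun t : F * F => pt w w' z t.1 t.2) _).
apply/subset_leq_card/subsetP => x; rewrite !inE => /andP [/and3P [_ /eqP accept _]].
case/imsetP => -[s u]; rewrite inE /= => nz_s x_su; subst x.
apply/imsetP; exists (s, u) => //; rewrite inE /= nz_s QE subr_eq0 /=.
by move: accept; rewrite gfun_pt // !mulr1 addr0 => ->.
Qed.

End Soundness.

(* [b] bounds the independent fooling points, [q = |F|] the dependent ones,
   and [N = q ^ d]. *)
Lemma fooled_count_arith (b q D X N : nat) :
  (0 < D)%N -> (2 <= X)%N -> (D * X = q)%N -> (q * q * q <= N)%N ->
  (b * q.-1 <= N * D.-1)%N -> ((b + q) * X <= N)%N.
Proof.
move=> D_gt0 X_ge2 DXq qqqN hb.
have X_le_q : (X <= q)%N by rewrite -DXq leq_pmull.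
have q_gt1 : (1 < q)%N by apply: leq_trans X_le_q.
suff : ((b + q) * X * q.-1 <= N * q.-1)%N by rewrite leq_pmul2r // -subn1 subn_gt0.
have e1 : (b * q.-1 * X <= N * (q - X))%N.
  have -> : (q - X = D.-1 * X)%N by rewrite -DXq -subn1 mulnBl mul1n.
  by rewrite mulnA leq_mul2r hb orbT.
have e2 : (q * X * q.-1 <= N * (X - 1))%N.
  apply: (@leq_trans (q * q * q * (X - 1))%N); last by rewrite leq_mul2r qqqN orbT.
  have hX : (X <= 2 * (X - 1))%N by lia.
  have hq : (2 * q.-1 <= q * q)%N by rewrite mulnC leq_mul ?leq_pred.
  apply: (@leq_trans (q * (2 * (X - 1)) * q.-1)%N); first by rewrite leq_mul ?leq_mul.
  have -> : (q * (2 * (X - 1)) * q.-1 = q * (2 * q.-1) * (X - 1))%N.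
    by rewrite -!mulnA (mulnC (X - 1)%N).
  by rewrite -[(q * q * q)%N]mulnA; apply: leq_mul => //; apply: leq_mul.
have -> : (N * q.-1 = N * (q - X) + N * (X - 1))%N by rewrite -mulnDr; congr (_ * _); lia.
have -> : ((b + q) * X * q.-1 = b * q.-1 * X + q * X * q.-1)%N by ring.
exact: leq_add.
Qed.

Lemma prob_z_ge (F : finFieldType) d (E : pred 'rV[F]_d) (X : nat) : (0 < X)%N ->
  (#|[set z | ~~ E z]| * X <= #|F| ^ d)%N -> 1 - 1 / X%:R <= prob_z E.
Proof.
move=> X_gt0 hX; rewrite /prob_z.
have q_gt0 : (0 < #|F| ^ d)%N by rewrite expn_gt0 (cardD1 0).
have card_E : (#|[set z | E z]| + #|[set z | ~~ E z]| = #|F| ^ d)%N.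
  rewrite -[in RHS](mul1n d) -card_mx -(cardsC [set z | E z]).
  by congr (_ + _); apply: eq_card => z; rewrite !inE.
rewrite -(addnK #|[set z | ~~ E z]| #|[set z | E z]|) card_E.
rewrite natrB; last by apply: leq_trans hX; rewrite leq_pmulr.
rewrite mulrBl divff ?pnatr_eq0 -?lt0n // lerD2l lerN2 ler_pdivlMr ?ltr0n //.
by rewrite mulrAC ler_pdivrMr ?ltr0n // mul1r -natrM ler_nat.
Qed.

Lemma prob_z_1 (F : finFieldType) d (E : pred 'rV[F]_d) :
  (forall z, E z) -> prob_z E = 1.
Proof.
move=> hE; rewrite /prob_z (_ : [set z | E z] = setT); last by apply/setP => z; rewrite !inE hE.
by rewrite cardsT card_mx mul1n divff // pnatr_eq0 -lt0n expn_gt0 (cardD1 0).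
Qed.

Lemma honest_strategy_complete (F : finFieldType) d (w w' : 'rV[F]_d)
    (P : {mpoly F[d]}) (D : nat) :
  (msize P <= D)%N ->
  let Atil := fun z : 'rV[F]_d => P.@[coords z] in
  exists r : strategy F d,
    prob_z (fun z => alice_output D Atil r w w' z == Some (Atil w, Atil w')) = 1.
Proof.
move=> msize_P Atil; exists (fun _ x => Atil x); apply: prob_z_1 => z.
have [Pz msize_Pz Pz_pt] := mpoly_restrict_plane w w' z P.
have g_poly : poly2_deg_lt D (gfun (fun _ x => Atil x) w w' z).
  by apply: (poly2_deg_lt_of_msize (leq_trans msize_Pz msize_P)) => t1 t2; rewrite Pz_pt.
by rewrite /alice_output (introT (decPP _) g_poly) !gfunE pt10 pt00 pt01 eqxx.
Qed.

Lemma alice_sound (F : finFieldType) d (w w' : 'rV[F]_d) (P : {mpoly F[d]})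
    (D X : nat) :
  w != w' -> (3 <= d)%N -> (msize P <= D)%N -> (0 < D)%N -> (2 <= X)%N ->
  (D * X = #|F|)%N ->
  let Atil := fun z : 'rV[F]_d => P.@[coords z] in
  forall r : strategy F d,
    1 - 1 / X%:R <= prob_z (fun z => (alice_output D Atil r w w' z == Some (Atil w, Atil w'))
                                     || (alice_output D Atil r w w' z == None)).
Proof.
move=> ww' d_ge3 msize_P D_gt0 X_ge2 DXq Atil r.
apply: prob_z_ge; first exact: leq_trans X_ge2.
set fool := [set z | fooled D Atil r w w' z].
set indep := [set z | affine_indep w w' z].
have fool_split : (#|fool| <= #|fool :&: indep| + #|F|)%N.
  rewrite -(cardsID indep fool) leq_add2l; apply: leq_trans (card_not_affine_indep ww').
  by apply/subset_leq_card/subsetP => z; rewrite !inE => /andP [].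
have fool_indep : (#|fool :&: indep| * #|F|.-1 <= #|F| ^ d * D.-1)%N.
  have := double_count_plane_orbits (card_fooled_plane_orbit w w' r msize_P).
  rewrite (mulnC D.-1) [in X in (_ <= X)%N -> _]mulnCA mulnCA.
  by rewrite leq_pmul2l // (cardD1 0).
have q3 : (#|F| * #|F| * #|F| <= #|F| ^ d)%N.
  by rewrite -mulnA mulnn -expnS leq_pexp2l // (cardD1 0).
apply: leq_trans (fooled_count_arith D_gt0 X_ge2 DXq q3 fool_indep).
rewrite leq_mul2r; apply/orP; right; apply: leq_trans fool_split.
by apply/subset_leq_card/subsetP => z; rewrite !inE; apply: contraR; exact: alice_output_fooled.
Qed.

Lemma msize_LDE (F : finFieldType) d N (H : {set F}) (pi : 'rV[F]_d -> 'I_N)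
    (a : 'I_N -> F) (P : {mpoly F[d]}) :
  is_LDE H pi a P -> (msize P <= (d * #|H|.-1).+1)%N.
Proof.
case=> degP _; apply: msize_le_of_mdeg_lt => m hm; rewrite mdegE ltnS.
by rewrite -[d in (_ <= d * _)%N]card_ord -sum_nat_const leq_sum // => i _; apply: degP.
Qed.

Lemma protocol_parameters (k n d : nat) :
  n = (2 ^ k)%N -> ~~ odd k -> (4 < n)%N -> (d * k = 2 * n)%N ->
  [/\ (2 ^ k./2 * 2 ^ k./2 = n)%N, (2 <= 2 ^ k./2)%N, (3 <= d)%N & (d <= n)%N].
Proof.
move=> hn k_even n_gt4 hd.
have k_gt2 : (2 < k)%N.
  by rewrite ltnNge; apply/negP => k_le2; move: n_gt4; rewrite hn ltnNge (leq_pexp2l _ k_le2).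
have k_halfK : (k./2.*2 = k)%N by rewrite halfK (negbTE k_even) subn0.
split.
- by rewrite -expnD addnn k_halfK hn.
- by rewrite -[2%N]expn1 leq_pexp2l //; move: k_halfK; rewrite -muln2; lia.
- rewrite leqNgt; apply/negP => d_lt3.
  have : (d * k <= 2 * k)%N by rewrite leq_mul2r; apply/orP; right; lia.
  by have := ltn_expl k (ltnSn 1); lia.
- have : (2 * d <= d * k)%N by rewrite mulnC leq_mul2l ltnW ?orbT.
  lia.
Qed.

Theorem mainTheorem4
  (k n d : nat) (F : finFieldType) (c a0 : nat) (H : {set F})
  (pi : 'rV[F]_d -> 'I_(2 ^ n))
  (hn : n = (2 ^ k)%N) (hk : ~~ odd k) (hn4 : (4 < n)%N)
  (hd : (d * k = 2 * n)%N)
  (hc : (2 <= c)%N) (hF : #|F| = (2 ^ a0)%N) (hFc : #|F| = (n ^ c)%N)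
  (hH : #|H| = (2 ^ k./2)%N)
  (hpi_inj : {in cube d H &, injective pi})
  (hpi_onto : pi @: cube d H = [set: 'I_(2 ^ n)])
  (a : 'I_(2 ^ n) -> F) (P : {mpoly F[d]}) (hP : is_LDE H pi a P)
  (w w' : 'rV[F]_d) (hww : w != w') :
  let Atil := fun z : 'rV[F]_d => P.@[coords z] in
  let D := (n * 2 ^ k./2)%N (* = n^1.5 *) in
  (exists r : strategy F d,
     prob_z (fun z => alice_output D Atil r w w' z == Some (Atil w, Atil w')) = 1)
  /\
  (forall r : strategy F d,
     prob_z (fun z => (alice_output D Atil r w w' z == Some (Atil w, Atil w'))
                      || (alice_output D Atil r w w' z == None))
     >= 1 - 1 / ((n ^ (c - 2) * 2 ^ k./2)%N)%:R (* 1 - 1/n^(c-1.5) *)).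
Proof.
move=> Atil D.
have [hh h_ge2 d_ge3 d_le_n] := protocol_parameters hn hk hn4 hd.
have msize_P : (msize P <= D)%N.
  apply: leq_trans (msize_LDE hP) _; rewrite hH /D; nia.
split; first exact: honest_strategy_complete.
apply: alice_sound => //; rewrite /D.
- by rewrite muln_gt0 expn_gt0; lia.
- by apply: leq_trans h_ge2 _; rewrite leq_pmull // expn_gt0; lia.
- rewrite hFc (_ : (_ * _ = n ^ (c - 2) * n * (2 ^ k./2 * 2 ^ k./2))%N); last by ring.
  by rewrite hh -!expnSr; congr (expn n _); lia.
Qed.
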